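(* Let $N\ge1$, let $K\ge1$ be real, and let $X\in M(N)$ be a non-zero matrix with Schatten height $\widetilde h(X)\le K$. Then there exists a non-zero orthogonal projection $P\in M(N)$ such that $$|\langle X,P\rangle_{\mathrm{HS}}|\ge \frac{1}{2\sqrt{4\log(2K)+2}}\|X\|_2\|P\|_2.$$
   Context: $M(N)$ is the space of $N\times N$ complex matrices with Hilbert–Schmidt inner product $\langle A,B\rangle_{\mathrm{HS}}=\operatorname{tr}(A^*B)$. $\|A\|_1,\|A\|_2$ are the trace and Hilbert–Schmidt (Schatten-1 and -2) norms and $\|A\|_\infty$ the operator norm. The Schatten height of a non-zero matrix is $\widetilde h(A)=\sqrt{\|A\|_1\|A\|_\infty}/\|A\|_2$. *)

From mathcomp Require Import all_boot all_order all_algebra spectral.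
From mathcomp Require Import complex.
From mathcomp Require Import reals exp.
Set Implicit Arguments. Unset Strict Implicit. Unset Printing Implicit Defensive.
Import Order.TTheory GRing.Theory Num.Theory.
Local Open Scope ring_scope.

Section Schatten.
Variable R : realType.
Local Notation C := R[i].

Definition adjmx N (A : 'M[C]_N) : 'M[C]_N := \matrix_(i, j) (A j i)^*.

Definition hsdot N (A B : 'M[C]_N) : C := \tr (adjmx A *m B).

(* singular values: square roots of the eigenvalues (with multiplicity) of
   A^* A, read off the diagonal of its spectral (Schur) decomposition. *)
Definition singval N (A : 'M[C]_N) (i : 'I_N) : R :=
  complex.Re (sqrtC (spectral_diag (adjmx A *m A) 0 i)).

Definition trnorm N (A : 'M[C]_N) : R := \sum_i singval A i.
Definition opnorm N (A : 'M[C]_N) : R := \big[Num.max/0]_i singval A i.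
Definition hsnorm N (A : 'M[C]_N) : R := Num.sqrt (complex.Re (\tr (adjmx A *m A))).

Definition schatten_height N (A : 'M[C]_N) : R :=
  Num.sqrt (trnorm A * opnorm A) / hsnorm A.

Definition orth_proj N (P : 'M[C]_N) : Prop := adjmx P = P /\ P *m P = P.

Definition cabs (z : C) : R := complex.Re `|z|.
End Schatten.

From mathcomp Require Import all_boot all_order all_algebra spectral.
From mathcomp Require Import complex.
From mathcomp Require Import reals exp.
From mathcomp Require Import sesquilinear ring lra.
From Stdlib Require Import Classical.
Set Implicit Arguments. Unset Strict Implicit. Unset Printing Implicit Defensive.
Import Order.TTheory GRing.Theory Num.Theory.
Local Open Scope ring_scope.

(* Suppose no projection works and put b := ||X||_2 / (2 sqrt (4 ln (2K) + 2)).
   Diagonalise the Hermitian part of X by a unitary U (and likewise that of iX,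
   which carries the skew-Hermitian part of X). The real parts mu_j of the
   diagonal of U X U^* are the eigenvalues of that Hermitian part; they satisfy
   |mu_j| <= ||X||_oo and sum |mu_j| <= ||X||_1, and the spectral projections
   U^* 1_J U give |sum_(j in J) mu_j| <= b sqrt |J| for every J. Peeling off the
   smallest value one at a time turns these subset bounds into
   sum mu_j^2 <= 2 b^2 ln (||X||_oo / a) + a ||X||_1 for every 0 < a <= ||X||_oo.
   The two Hermitian parts together give ||X||_2^2 on the left, while for
   a = 2 b^2 / ||X||_1 the bound ||X||_1 ||X||_oo <= K^2 ||X||_2^2 makes the right
   side smaller: a contradiction. *)

Section SubsetSumBounds.
Variable R : realType.

Lemma ln_ge1BV (x : R) : 0 < x -> 1 - x^-1 <= ln x.
Proof.
move=> x_gt0; have := @le_ln1Dx R (x^-1 - 1).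
rewrite addrCA subrr addr0 lnV ?posrE // ltrBrDr addNr invr_gt0.
by move=> /(_ x_gt0); lra.
Qed.

Variables (I : finType) (b : R).
Implicit Types (x mu : I -> R) (U : {set I}).

Lemma lbound_mul_sum_le_sqr x U v : 0 < v -> (forall j, j \in U -> v <= x j) ->
  \sum_(j in U) x j <= b * Num.sqrt #|U|%:R -> v * \sum_(j in U) x j <= b ^+ 2.
Proof.
move=> v_gt0 v_le sum_le.
have [->|/set0Pn[j0 j0U]] := eqVneq U set0; first by rewrite big_set0 mulr0 sqr_ge0.
set A := \sum_(j in U) x j in sum_le *; set n : R := #|U|%:R in sum_le.
have n_gt0 : 0 < n by rewrite ltr0n card_gt0; apply/set0Pn; exists j0.
have vn_le : v * n <= A.
  by rewrite /A /n -sum1_card natr_sum mulr_sumr ler_sum // => j /v_le; rewrite mulr1.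
have A_ge0 : 0 <= A by apply: le_trans vn_le; rewrite mulr_ge0 // ltW.
have A2_le : A ^+ 2 <= b ^+ 2 * n.
  have -> : b ^+ 2 * n = (b * Num.sqrt n) ^+ 2 by rewrite exprMn sqr_sqrtr // ltW.
  by rewrite lerXn2r ?nnegrE // (le_trans A_ge0).
rewrite -(ler_pM2r n_gt0); nra.
Qed.

Lemma excess_sum_le_ln x (M : R) U a : 0 < a -> a <= M ->
  (forall j, j \in U -> a <= x j <= M) ->
  (forall J : {set I}, J \subset U -> \sum_(j in J) x j <= b * Num.sqrt #|J|%:R) ->
  \sum_(j in U) x j * (x j - a) <= b ^+ 2 * ln (M / a).
Proof.
have [n] := ubnP #|U|; elim: n U a => // n IH U a U_lt a_gt0 a_le_M x_in sum_le.
have [->|U_neq0] := eqVneq U set0.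
  by rewrite big_set0 mulr_ge0 ?sqr_ge0 // ln_ge0 // ler_pdivlMr // mul1r.
have [u uU u_min] : exists2 u, u \in U & forall j, j \in U -> x u <= x j.
  by case/set0Pn: U_neq0 => j0 j0U; case: (@arg_minP _ _ I j0 (mem U) x j0U) => u; exists u.
(* Peel off a smallest value v: the induction hypothesis at threshold v bounds
   the rest, and v * \sum_U x <= b^2 pays for raising the threshold from a to v. *)
set v := x u in u_min; have /andP[a_le_v v_le_M] := x_in u uU.
have v_gt0 : 0 < v := lt_le_trans a_gt0 a_le_v.
have v_le_sum : v * \sum_(j in U) x j <= b ^+ 2.
  by apply: lbound_mul_sum_le_sqr => //; apply: sum_le.
have IHv : \sum_(j in U :\ u) x j * (x j - v) <= b ^+ 2 * ln (M / v).
  apply: IH => // [|j /setD1P[_ jU]|J JU].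
  - by move: U_lt; rewrite (cardsD1 u U) uU.
  - by rewrite u_min //=; case/andP: (x_in j jU).
  - by apply: sum_le; apply: subset_trans JU (subsetDl _ _).
have excess_le : (v - a) * \sum_(j in U) x j <= b ^+ 2 * ln (v / a).
  have /ln_ge1BV : 0 < v / a by rewrite divr_gt0.
  rewrite invf_div => /(ler_wpM2l (sqr_ge0 b)); apply: le_trans.
  have -> : (v - a) * \sum_(j in U) x j = (1 - a / v) * (v * \sum_(j in U) x j).
    by field; rewrite gt_eqF.
  by rewrite mulrC ler_wpM2r // subr_ge0 ler_pdivrMr // mul1r.
rewrite (_ : \sum_(j in U) x j * (x j - a) =
    \sum_(j in U) x j * (x j - v) + (v - a) * \sum_(j in U) x j); last first.
  by rewrite mulr_sumr -big_split; apply: eq_bigr => j _ /=; ring.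
rewrite (big_setD1 u uU) /= subrr mulr0 add0r.
have -> : M / a = M / v * (v / a) by field; rewrite !gt_eqF.
rewrite lnM ?posrE ?divr_gt0 ?(lt_le_trans v_gt0 v_le_M) // mulrDr.
exact: lerD.
Qed.

Lemma excess_gt_le_ln mu a M : 0 < a -> a <= M -> (forall j, mu j <= M) ->
  (forall J : {set I}, \sum_(j in J) mu j <= b * Num.sqrt #|J|%:R) ->
  \sum_(j | a < mu j) mu j * (mu j - a) <= b ^+ 2 * ln (M / a).
Proof.
move=> a_gt0 a_le_M mu_le sum_le.
rewrite (eq_bigl (fun j => j \in [set j | a < mu j])) => [|j]; last by rewrite inE.
by apply: excess_sum_le_ln => // j; rewrite inE => /ltW ->; apply: mu_le.
Qed.

Lemma sum_sqr_le_ln mu a M : 0 < a -> a <= M -> (forall j, `|mu j| <= M) ->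
  (forall J : {set I}, `|\sum_(j in J) mu j| <= b * Num.sqrt #|J|%:R) ->
  \sum_j mu j ^+ 2 <= 2 * (b ^+ 2 * ln (M / a)) + a * \sum_j `|mu j|.
Proof.
move=> a_gt0 a_le_M mu_le sum_le.
have pos : \sum_(j | a < mu j) mu j * (mu j - a) <= b ^+ 2 * ln (M / a).
  by apply: excess_gt_le_ln => // [j|J]; apply: le_trans (ler_norm _) _.
have neg : \sum_(j | a < - mu j) - mu j * (- mu j - a) <= b ^+ 2 * ln (M / a).
  apply: excess_gt_le_ln => // [j|J].
  - by apply: le_trans (ler_norm _) _; rewrite normrN mu_le.
  - by rewrite sumrN; apply: le_trans (ler_norm _) _; rewrite normrN sum_le.
rewrite -[2]/(1 + 1) mulrDl mul1r.
apply: le_trans (lerD (lerD pos neg) (lexx _)).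
rewrite [X in _ <= X + _ + _]big_mkcond [X in _ <= _ + X + _]big_mkcond mulr_sumr.
rewrite -!big_split; apply: ler_sum => j _ /=.
have [mu_ge0|mu_lt0] := lerP 0 (mu j).
  by rewrite ger0_norm //; case: ltrP => ?; case: ltrP => ?; nra.
by rewrite ltr0_norm //; case: ltrP => ?; case: ltrP => ?; nra.
Qed.

End SubsetSumBounds.

Section Threshold.
Variable R : realType.

Lemma ln_height_le (K : R) : 1 <= K ->
  ln (2 * (4 * ln (2 * K) + 2) * K ^+ 2) <= 4 * ln (2 * K).
Proof.
move=> K_ge1; set L := ln (2 * K).
have L_ge0 : 0 <= L by rewrite ln_ge0 //; lra.
have -> : 2 * (4 * L + 2) * K ^+ 2 = (2 * K) ^+ 2 * (1 + 2 * L) by ring.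
rewrite lnM ?posrE ?exprn_gt0 ?lnXn; try lra.
have : ln (1 + 2 * L) <= 2 * L by apply: le_ln1Dx; lra.
rewrite -/L mulr2n; lra.
Qed.

Lemma threshold_tradeoff (K s T M : R) :
  1 <= K -> 0 < s -> 0 <= T -> T * M <= K ^+ 2 * s ^+ 2 -> s ^+ 2 <= M * T ->
  let b := 1 / (2 * Num.sqrt (4 * ln (2 * K) + 2)) * s in
  let a := 2 * b ^+ 2 / T in
  [/\ 0 < a, a <= M & 2 * (2 * (b ^+ 2 * ln (M / a)) + a * T) < s ^+ 2].
Proof.
(* With q := 4 ln (2K) + 2 one has b^2 = s^2 / (4q) and a = s^2 / (2qT); the claim
   reduces to ln (M / a) < q - 1, and M / a <= 2 q K^2 by the height bound. *)
move=> K_ge1 s_gt0 T_ge0 TM_le S_le b a; set S := s ^+ 2 in TM_le S_le *.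
have S_gt0 : 0 < S by rewrite exprn_gt0.
pose L := ln (2 * K); pose q := 4 * L + 2.
have L_ge0 : 0 <= L by rewrite ln_ge0 //; lra.
have q_gt0 : 0 < q by rewrite /q; lra.
have T_gt0 : 0 < T.
  by rewrite lt0r T_ge0 andbT; apply: contraTneq S_le => ->; rewrite mulr0 -ltNge.
have M_gt0 : 0 < M by rewrite -(pmulr_lgt0 _ T_gt0) (lt_le_trans S_gt0).
have b2 : b ^+ 2 = S / (4 * q).
  rewrite /b exprMn expr_div_n expr1n exprMn sqr_sqrtr ?(ltW q_gt0) //.
  by rewrite -/L -/q /S; field; rewrite gt_eqF.
have aE : a = S / (2 * q * T) by rewrite /a b2; field; rewrite !gt_eqF.
clearbody a b.
have a_gt0 : 0 < a by rewrite aE divr_gt0 ?mulr_gt0.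
have a_le_M : a <= M.
  rewrite aE ler_pdivrMr ?mulr_gt0 //; apply: le_trans S_le _.
  have -> : M * (2 * q * T) = M * T + (2 * q - 1) * (M * T) by ring.
  by rewrite lerDl mulr_ge0 ?mulr_ge0 ?ltW // /q; lra.
have lnMa_le : ln (M / a) <= 4 * L.
  apply: le_trans (ln_height_le K_ge1); rewrite ler_ln ?posrE ?divr_gt0 //; last first.
    by rewrite !mulr_gt0 ?exprn_gt0 //; lra.
  rewrite aE invf_div mulrA ler_pdivrMr //.
  have -> : M * (2 * q * T) = 2 * q * (T * M) by ring.
  have -> : 2 * q * K ^+ 2 * S = 2 * q * (K ^+ 2 * S) by ring.
  by rewrite ler_wpM2l // mulr_ge0 // ltW.
split=> //.
have -> : 2 * (2 * (b ^+ 2 * ln (M / a)) + a * T) = S / q * (ln (M / a) + 1).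
  by rewrite aE b2; field; rewrite !gt_eqF.
by rewrite mulrAC ltr_pdivrMr // ltr_pM2l // /q; lra.
Qed.

End Threshold.

Local Open Scope sesquilinear_scope.

Section ConjugateTranspose.
Variable C : numClosedFieldType.

Lemma trmxC_mul m n p (A : 'M[C]_(m, n)) (B : 'M[C]_(n, p)) :
  (A *m B) ^t* = B ^t* *m A ^t*.
Proof. by rewrite trmx_mul map_mxM. Qed.

Lemma trmxC_conj n (U X : 'M[C]_n) : (U *m X *m U ^t*) ^t* = U *m X ^t* *m U ^t*.
Proof. by rewrite !trmxC_mul trmxCK mulmxA. Qed.

Lemma trmxC_scale m n (a : C) (A : 'M[C]_(m, n)) : (a *: A) ^t* = a^* *: A ^t*.
Proof. by apply/matrixP => i j; rewrite !mxE rmorphM. Qed.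

Lemma trmxC_add m n (A B : 'M[C]_(m, n)) : (A + B) ^t* = A ^t* + B ^t*.
Proof. by apply/matrixP => i j; rewrite !mxE rmorphD. Qed.

Lemma unitarymx_trC_mul n (U : 'M[C]_n) : U \is unitarymx -> U ^t* *m U = 1%:M.
Proof. by rewrite -trmxC_unitary => /unitarymxP; rewrite trmxCK. Qed.

Lemma mxtrace_unitary_conj n (U A : 'M[C]_n) : U \is unitarymx ->
  \tr (U ^t* *m A *m U) = \tr A.
Proof. by move=> U_unitary; rewrite mxtrace_mulC mulmxA (unitarymxP U_unitary) mul1mx. Qed.

Lemma trC_mulmx_diag m n (A : 'M[C]_(m, n)) j :
  (A ^t* *m A) j j = \sum_k `|A k j| ^+ 2.
Proof. by rewrite mxE; apply: eq_bigr => k _; rewrite !mxE normCKC. Qed.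

Lemma mulmx_trC_diag m n (A : 'M[C]_(m, n)) i :
  (A *m A ^t*) i i = \sum_k `|A i k| ^+ 2.
Proof. by rewrite mxE; apply: eq_bigr => k _; rewrite !mxE normCK. Qed.

Lemma CauchySchwarz_sum n (u v : 'I_n -> C) :
  \sum_i `|u i| * `|v i| <=
    sqrtC (\sum_i `|u i| ^+ 2) * sqrtC (\sum_i `|v i| ^+ 2).
Proof.
pose r (w : 'I_n -> C) := \row_i `|w i|.
have dotE w w' : dotmx (r w) (r w') = \sum_i `|w i| * `|w' i|.
  by rewrite dotmxE mxE; apply: eq_bigr => i _; rewrite !mxE conj_normC.
have := (CauchySchwarz_sqrt (@dotmx C n) (r u) (r v)).1.
by rewrite /= !dotE ger0_norm ?sumr_ge0 -?expr2 // => i _; rewrite mulr_ge0.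
Qed.

Lemma spectral_decomp n (A : 'M[C]_n) : A \is normalmx ->
  A = (spectralmx A) ^t* *m diag_mx (spectral_diag A) *m spectralmx A.
Proof.
by move/orthomx_spectralP => {1}->; rewrite invmx_unitary // spectral_unitarymx.
Qed.

Lemma spectral_diagonalize n (A : 'M[C]_n) : A \is normalmx ->
  spectralmx A *m A *m (spectralmx A) ^t* = diag_mx (spectral_diag A).
Proof.
move=> /spectral_decomp {2}->; have /unitarymxP UUt := spectral_unitarymx A.
by rewrite !mulmxA UUt mul1mx -mulmxA UUt mulmx1.
Qed.

End ConjugateTranspose.

Section UnitaryProjection.
Variable C : numClosedFieldType.

Definition unitary_proj n (U : 'M[C]_n) (J : {set 'I_n}) : 'M[C]_n :=
  U ^t* *m diag_mx (\row_j (j \in J)%:R) *m U.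

Variables (n : nat) (U : 'M[C]_n) (J : {set 'I_n}).
Hypothesis U_unitary : U \is unitarymx.

Let D : 'M[C]_n := diag_mx (\row_j (j \in J)%:R).

Let D_trC : D ^t* = D.
Proof.
rewrite tr_diag_mx map_diag_mx; congr diag_mx; apply/rowP => j.
by rewrite !mxE rmorph_nat.
Qed.

Let D_idem : D *m D = D.
Proof.
rewrite mulmx_diag; congr diag_mx; apply/rowP => j.
by rewrite !mxE; case: (j \in J); rewrite ?mulr1 ?mulr0.
Qed.

Lemma unitary_proj_trC : (unitary_proj U J) ^t* = unitary_proj U J.
Proof. by rewrite /unitary_proj !trmxC_mul trmxCK D_trC mulmxA. Qed.

Lemma unitary_proj_idem : unitary_proj U J *m unitary_proj U J = unitary_proj U J.
Proof.
rewrite /unitary_proj -!mulmxA [U *m (U ^t* *m _)]mulmxA (unitarymxP U_unitary).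
by rewrite mul1mx [D *m (D *m U)]mulmxA D_idem.
Qed.

Lemma mxtrace_unitary_proj : \tr (unitary_proj U J) = #|J|%:R.
Proof.
rewrite /unitary_proj mxtrace_unitary_conj // mxtrace_diag.
rewrite (eq_bigr (fun j => (j \in J)%:R)) => [|j _]; last by rewrite mxE.
by rewrite -natr_sum -sum1_card [in RHS]big_mkcond.
Qed.

Lemma mxtrace_mul_unitary_proj (A : 'M[C]_n) :
  \tr (A *m unitary_proj U J) = \sum_(j in J) (U *m A *m U ^t*) j j.
Proof.
rewrite /unitary_proj !mulmxA mxtrace_mulC !mulmxA /mxtrace [RHS]big_mkcond /=.
apply: eq_bigr => j _; rewrite mul_mx_diag !mxE.
by case: (j \in J); rewrite ?mulr1 ?mulr0.
Qed.

End UnitaryProjection.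

Section SingularValues.
Variable C : numClosedFieldType.

Definition singvalC n (X : 'M[C]_n) i := sqrtC (spectral_diag (X ^t* *m X) 0 i).

Variables (n : nat) (X : 'M[C]_n).

Lemma mxtrace_trC_mul_eq0 : (\tr (X ^t* *m X) == 0) = (X == 0).
Proof.
apply/eqP/eqP => [tr0|->]; last by rewrite mulmx0 mxtrace0.
have sq_ge0 k l : 0 <= `|X k l| ^+ 2 := exprn_ge0 2 (normr_ge0 _).
have col0 l : \sum_k `|X k l| ^+ 2 = 0.
  apply: (psumr_eq0P (P := predT) (F := fun l => \sum_k `|X k l| ^+ 2)) => // [l' _|].
    by apply: sumr_ge0 => k _; apply: sq_ge0.
  rewrite -[RHS]tr0 [RHS]/mxtrace.
  by apply: eq_bigr => l' _; rewrite trC_mulmx_diag.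
apply/matrixP => k l; rewrite mxE; apply/normr0_eq0/eqP; rewrite -sqrf_eq0; apply/eqP.
exact: (psumr_eq0P (P := predT) (fun k _ => sq_ge0 k l) (col0 l)).
Qed.

Lemma trC_mul_normal : X ^t* *m X \is normalmx.
Proof. by apply/normalmxP; rewrite trmxC_mul trmxCK. Qed.

Let W := spectralmx (X ^t* *m X).
Let sigma2 := spectral_diag (X ^t* *m X).
Let W_unitary : W \is unitarymx. Proof. exact: spectral_unitarymx. Qed.

Let X_decomp : X ^t* *m X = W ^t* *m diag_mx sigma2 *m W.
Proof. exact: spectral_decomp trC_mul_normal. Qed.

(* X = Y W, where the columns of Y are orthogonal with squared norms sigma2. *)
Let Y := X *m W ^t*.

Let YtY : Y ^t* *m Y = diag_mx sigma2.
Proof.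
rewrite trmxC_mul trmxCK !mulmxA -(mulmxA W).
by rewrite spectral_diagonalize // trC_mul_normal.
Qed.

Lemma spectral_diag_trC_mul_ge0 i : 0 <= sigma2 0 i.
Proof.
have /matrixP/(_ i i) := YtY; rewrite trC_mulmx_diag mxE eqxx mulr1n => <-.
by rewrite sumr_ge0 // => k _; rewrite exprn_ge0.
Qed.

Lemma singvalC_ge0 i : 0 <= singvalC X i.
Proof. by rewrite sqrtC_ge0 spectral_diag_trC_mul_ge0. Qed.

Lemma singvalC_sqr i : singvalC X i ^+ 2 = sigma2 0 i.
Proof. exact: sqrtCK. Qed.

Lemma mxtrace_trC_mul : \tr (X ^t* *m X) = \sum_i singvalC X i ^+ 2.
Proof.
rewrite X_decomp mxtrace_unitary_conj // mxtrace_diag.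
by apply: eq_bigr => i _; rewrite singvalC_sqr.
Qed.

Lemma sum_norm_unitary_conj_diag_le (U : 'M[C]_n) : U \is unitarymx ->
  \sum_j `|(U *m X *m U ^t*) j j| <= \sum_i singvalC X i.
Proof.
move=> U_unitary; set A := U *m Y; set Q := W *m U ^t*.
have col_norm i : \sum_j `|A j i| ^+ 2 = sigma2 0 i.
  rewrite -trC_mulmx_diag /A trmxC_mul mulmxA -(mulmxA _ _ U).
  by rewrite unitarymx_trC_mul // mulmx1 YtY mxE eqxx mulr1n.
have row_norm i : \sum_j `|Q i j| ^+ 2 = 1.
  rewrite -mulmx_trC_diag /Q trmxC_mul trmxCK mulmxA -(mulmxA W).
  by rewrite unitarymx_trC_mul // mulmx1 (unitarymxP W_unitary) mxE eqxx.
have -> : U *m X *m U ^t* = A *m Q by rewrite /A /Q !mulmxA mulmxKtV.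
apply: (@le_trans _ _ (\sum_i \sum_j `|A j i| * `|Q i j|)).
  rewrite exchange_big; apply: ler_sum => j _; rewrite mxE.
  by apply: le_trans (ler_norm_sum _ _ _) _; apply: ler_sum => i _; rewrite normrM.
apply: ler_sum => i _; apply: le_trans (CauchySchwarz_sum _ _) _.
by rewrite col_norm row_norm sqrtC1 mulr1.
Qed.

Lemma norm_unitary_conj_diag_le (U : 'M[C]_n) (M : C) : U \is unitarymx ->
  (forall i, singvalC X i <= M) -> forall j, `|(U *m X *m U ^t*) j j| <= M.
Proof.
move=> U_unitary M_ge j; set B := X *m U ^t*; set Q := W *m U ^t*.
have M_ge0 : 0 <= M := le_trans (singvalC_ge0 j) (M_ge j).
have row_norm : \sum_k `|U j k| ^+ 2 = 1.
  by rewrite -mulmx_trC_diag (unitarymxP U_unitary) mxE eqxx.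
have col_norm : \sum_i `|Q i j| ^+ 2 = 1.
  rewrite -trC_mulmx_diag /Q trmxC_mul trmxCK mulmxA -(mulmxA U).
  by rewrite unitarymx_trC_mul // mulmx1 (unitarymxP U_unitary) mxE eqxx.
have B_col : \sum_k `|B k j| ^+ 2 <= M ^+ 2.
  have -> : \sum_k `|B k j| ^+ 2 = \sum_i sigma2 0 i * `|Q i j| ^+ 2.
    rewrite -trC_mulmx_diag; have -> : B ^t* *m B = Q ^t* *m diag_mx sigma2 *m Q.
      by rewrite /B /Q !trmxC_mul trmxCK !mulmxA -(mulmxA U) X_decomp !mulmxA.
    rewrite mul_mx_diag mxE; apply: eq_bigr => i _.
    by rewrite !mxE normCKC; ring.
  rewrite -[M ^+ 2]mulr1 -col_norm mulr_sumr; apply: ler_sum => i _.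
  by rewrite ler_wpM2r ?exprn_ge0 // -singvalC_sqr lerXn2r ?nnegrE ?singvalC_ge0.
rewrite -mulmxA -/B mxE; apply: le_trans (ler_norm_sum _ _ _) _.
rewrite (eq_bigr (fun k => `|U j k| * `|B k j|)) => [|k _]; last by rewrite normrM.
apply: le_trans (CauchySchwarz_sum _ _) _; rewrite row_norm sqrtC1 mul1r.
rewrite -(sqrCK M_ge0) ler_sqrtC // !nnegrE ?exprn_ge0 //.
by rewrite sumr_ge0 // => k _; rewrite exprn_ge0.
Qed.

End SingularValues.

Section HermitianPart.
Variable C : numClosedFieldType.

Definition hermpart n (X : 'M[C]_n) : 'M[C]_n := 2^-1 *: (X + X ^t*).

Variables (n : nat) (X : 'M[C]_n).

Lemma hermpart_trC : (hermpart X) ^t* = hermpart X.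
Proof.
rewrite /hermpart trmxC_scale trmxC_add trmxCK addrC; congr (_ *: _).
by apply/CrealP; rewrite realV realn.
Qed.

Lemma hermpart_normal : hermpart X \is normalmx.
Proof. by apply/normalmxP; rewrite hermpart_trC. Qed.

Lemma hermpart_conj_diag (U : 'M[C]_n) j :
  (U *m hermpart X *m U ^t*) j j = 'Re ((U *m X *m U ^t*) j j).
Proof.
rewrite /hermpart -scalemxAr -scalemxAl mulmxDr mulmxDl.
by rewrite -trmxC_conj !mxE ReE mulrC.
Qed.

Lemma mxtrace_hermpart_sqr (U := spectralmx (hermpart X)) :
  \tr (hermpart X *m hermpart X) = \sum_j 'Re ((U *m X *m U ^t*) j j) ^+ 2.
Proof.
have U_unitary : U \is unitarymx := spectral_unitarymx _.
have UHU := spectral_diagonalize hermpart_normal; rewrite -/U in UHU.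
rewrite -[LHS](mxtrace_unitary_conj _ (_ : U ^t* \is unitarymx)) ?trmxC_unitary //.
rewrite trmxCK.
have -> : U *m (hermpart X *m hermpart X) *m U ^t* =
    (U *m hermpart X *m U ^t*) *m (U *m hermpart X *m U ^t*).
  by rewrite !mulmxA mulmxKtV.
rewrite [in LHS]UHU mulmx_diag mxtrace_diag; apply: eq_bigr => j _.
by rewrite mxE -hermpart_conj_diag UHU mxE eqxx mulr1n expr2.
Qed.

Lemma mxtrace_hermpart_sqrD :
  \tr (hermpart X *m hermpart X) + \tr (hermpart ('i *: X) *m hermpart ('i *: X)) =
  \tr (X ^t* *m X).
Proof.
(* With H + A = X and H - A = X^*, tr (H A) = tr (A H) gives
   tr (H H) - tr (A A) = tr ((H + A) (H - A)) = tr (X X^* ). *)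
set H := hermpart X; set A : 'M[C]_n := 2^-1 *: (X - X ^t*).
have -> : hermpart ('i *: X) = 'i *: A.
  by rewrite /hermpart /A trmxC_scale conjCi scaleNr -scalerBr !scalerA mulrC.
have HA_X : H + A = X by apply/matrixP => k l; rewrite !mxE; field.
have HA_Xt : H - A = X ^t* by apply/matrixP => k l; rewrite !mxE; field.
have -> : \tr ('i *: A *m ('i *: A)) = - \tr (A *m A).
  by rewrite -scalemxAl -scalemxAr scalerA mxtraceZ -expr2 sqrCi mulN1r.
rewrite [RHS]mxtrace_mulC -HA_Xt -HA_X mulmxDl !mulmxBr raddfD !raddfB /=.
by rewrite (mxtrace_mulC A H) addrA subrK.
Qed.

End HermitianPart.

Section SchattenNorms.
Variable R : realType.
Local Notation C := R[i].
Variable n : nat.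
Implicit Types (X Y U P : 'M[C]_n) (z : C).

Lemma adjmxE X : adjmx X = X ^t*.
Proof. by apply/matrixP => i j; rewrite !mxE. Qed.

Lemma cabsE z : (cabs z)%:C%C = `|z|.
Proof. by rewrite /cabs RRe_real // normr_real. Qed.

Lemma Re_le_cabs z : `|complex.Re z| <= cabs z.
Proof. by rewrite -lecR cabsE normc_ge_Re. Qed.

Lemma singvalE X i : (singval X i)%:C%C = singvalC X i.
Proof. by rewrite /singval adjmxE RRe_real // ger0_real // singvalC_ge0. Qed.

Lemma singval_ge0 X i : 0 <= singval X i.
Proof. by rewrite -ler0c singvalE singvalC_ge0. Qed.

Lemma singval_le_opnorm X i : singval X i <= opnorm X.
Proof. exact: le_bigmax. Qed.

Lemma Re_mxtrace_trC_mul X : complex.Re (\tr (X ^t* *m X)) = \sum_i singval X i ^+ 2.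
Proof.
rewrite mxtrace_trC_mul.
by under eq_bigr do rewrite -singvalE -rmorphXn; rewrite -rmorph_sum.
Qed.

Lemma hsnorm_sqr X : hsnorm X ^+ 2 = complex.Re (\tr (X ^t* *m X)).
Proof.
rewrite /hsnorm adjmxE sqr_sqrtr // Re_mxtrace_trC_mul.
by apply: sumr_ge0 => i _; rewrite sqr_ge0.
Qed.

Lemma trnorm_ge0 X : 0 <= trnorm X.
Proof. by apply: sumr_ge0 => i _; apply: singval_ge0. Qed.

Lemma hsnorm_sqr_le X : hsnorm X ^+ 2 <= opnorm X * trnorm X.
Proof.
rewrite hsnorm_sqr Re_mxtrace_trC_mul /trnorm mulr_sumr; apply: ler_sum => i _.
by rewrite expr2 ler_wpM2r ?singval_ge0 ?singval_le_opnorm.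
Qed.

Lemma hsnorm_gt0 X : X != 0 -> 0 < hsnorm X.
Proof.
rewrite -mxtrace_trC_mul_eq0 /hsnorm sqrtr_gt0 adjmxE => tr_neq0.
have tr_ge0 : 0 <= \tr (X ^t* *m X).
  by rewrite mxtrace_trC_mul sumr_ge0 // => i _; rewrite exprn_ge0 ?singvalC_ge0.
by rewrite -ltcR RRe_real ?ger0_real // lt0r tr_neq0.
Qed.

Lemma trnorm_mul_opnorm_le X (K : R) : X != 0 -> 0 <= K -> schatten_height X <= K ->
  trnorm X * opnorm X <= K ^+ 2 * hsnorm X ^+ 2.
Proof.
move=> X_neq0 K_ge0; have hs_gt0 := hsnorm_gt0 X_neq0.
have TM_ge0 : 0 <= trnorm X * opnorm X.
  by rewrite mulrC (le_trans _ (hsnorm_sqr_le X)) ?sqr_ge0.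
rewrite /schatten_height ler_pdivrMr // => height_le.
by rewrite -(sqr_sqrtr TM_ge0) -exprMn lerXn2r ?nnegrE ?sqrtr_ge0 // mulr_ge0 // ltW.
Qed.

Lemma singval_scale X z : `|z| = 1 -> singval (z *: X) = singval X.
Proof.
move=> z1; rewrite /singval !adjmxE trmxC_scale -scalemxAl -scalemxAr scalerA.
by rewrite -normCKC z1 expr1n scale1r.
Qed.

Lemma cabs_hsdot_scale X P z : `|z| = 1 -> cabs (hsdot (z *: X) P) = cabs (hsdot X P).
Proof.
move=> z1; apply: (@complexI R); rewrite !cabsE /hsdot !adjmxE trmxC_scale.
by rewrite -scalemxAl mxtraceZ normrM norm_conjC z1 mul1r.
Qed.

Lemma unitary_proj_orth U J : U \is unitarymx -> orth_proj (unitary_proj U J).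
Proof. by move=> U_unitary; rewrite /orth_proj adjmxE unitary_proj_trC unitary_proj_idem. Qed.

Lemma hsnorm_unitary_proj U J : U \is unitarymx ->
  hsnorm (unitary_proj U J) = Num.sqrt #|J|%:R.
Proof.
move=> U_unitary; rewrite /hsnorm adjmxE unitary_proj_trC unitary_proj_idem //.
by rewrite mxtrace_unitary_proj // -(rmorph_nat (real_complex R)).
Qed.

Lemma unitary_proj_neq0 U J : U \is unitarymx -> J != set0 -> unitary_proj U J != 0.
Proof.
move=> U_unitary; apply: contraNneq => P0.
have := mxtrace_unitary_proj J U_unitary; rewrite P0 mxtrace0 => /eqP.
by rewrite eq_sym pnatr_eq0 cards_eq0.
Qed.

Lemma hsdot_unitary_proj X U J : U \is unitarymx ->
  hsdot X (unitary_proj U J) = \sum_(j in J) ((U *m X *m U ^t*) j j)^*.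
Proof.
move=> U_unitary; rewrite /hsdot adjmxE mxtrace_mul_unitary_proj //.
by apply: eq_bigr => j _; rewrite -trmxC_conj !mxE.
Qed.

Lemma Re_mxtrace_hermpart_sqr_le Y (a b : R) : 0 < a -> a <= opnorm Y ->
  (forall U J, U \is unitarymx ->
     cabs (hsdot Y (unitary_proj U J)) <= b * Num.sqrt #|J|%:R) ->
  complex.Re (\tr (hermpart Y *m hermpart Y)) <=
    2 * (b ^+ 2 * ln (opnorm Y / a)) + a * trnorm Y.
Proof.
move=> a_gt0 a_le proj_le; set U := spectralmx (hermpart Y).
have U_unitary : U \is unitarymx := spectral_unitarymx _.
set d := fun j => (U *m Y *m U ^t*) j j; pose mu j := complex.Re (d j).
have -> : complex.Re (\tr (hermpart Y *m hermpart Y)) = \sum_j mu j ^+ 2.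
  rewrite mxtrace_hermpart_sqr -/U.
  by under eq_bigr do rewrite -complexRe -rmorphXn; rewrite -rmorph_sum.
have cabs_d_le j : cabs (d j) <= opnorm Y.
  rewrite -lecR cabsE; apply: norm_unitary_conj_diag_le => // i.
  by rewrite -singvalE lecR singval_le_opnorm.
have sum_cabs_d_le : \sum_j cabs (d j) <= trnorm Y.
  have := sum_norm_unitary_conj_diag_le Y U_unitary.
  rewrite -(eq_bigr _ (fun j _ => cabsE (d j))) -(eq_bigr _ (fun i _ => singvalE Y i)).
  by rewrite -!rmorph_sum lecR.
apply: le_trans (sum_sqr_le_ln (M := opnorm Y) a_gt0 a_le _ _) _.
- by move=> j; apply: le_trans (Re_le_cabs _) (cabs_d_le j).
- move=> J; apply: le_trans (proj_le U J U_unitary).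
  rewrite hsdot_unitary_proj //.
  have -> : \sum_(j in J) mu j = complex.Re (\sum_(j in J) (d j)^*).
    apply: (@complexI R); rewrite rmorph_sum complexRe raddf_sum.
    by apply: eq_bigr => j _; rewrite -[LHS]/((mu j)%:C)%C complexRe -Re_conj.
  exact: Re_le_cabs.
rewrite lerD2l ler_pM2l //.
exact: le_trans (ler_sum _ (fun j _ => Re_le_cabs (d j))) sum_cabs_d_le.
Qed.

Lemma hsnorm_sqr_le_ln X (a b : R) : 0 < a -> a <= opnorm X ->
  (forall U J, U \is unitarymx ->
     cabs (hsdot X (unitary_proj U J)) <= b * Num.sqrt #|J|%:R) ->
  hsnorm X ^+ 2 <= 2 * (2 * (b ^+ 2 * ln (opnorm X / a)) + a * trnorm X).
Proof.
move=> a_gt0 a_le proj_le.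
have part_le z : `|z| = 1 -> complex.Re (\tr (hermpart (z *: X) *m hermpart (z *: X))) <=
    2 * (b ^+ 2 * ln (opnorm X / a)) + a * trnorm X.
  move=> z1; have := Re_mxtrace_hermpart_sqr_le (Y := z *: X) a_gt0.
  rewrite /opnorm /trnorm singval_scale //; apply=> // U J U_unitary.
  by rewrite cabs_hsdot_scale //; apply: proj_le.
have := lerD (part_le 1 (normr1 _)) (part_le 'i (normCi _)).
rewrite scale1r -raddfD /= mxtrace_hermpart_sqrD -hsnorm_sqr; lra.
Qed.

End SchattenNorms.

Theorem lemma4p3 (R : realType) (N : nat) (K : R) (X : 'M[R[i]]_N) :
  (1 <= N)%N -> 1 <= K -> X != 0 -> schatten_height X <= K ->
  exists P : 'M[R[i]]_N,
    [/\ P != 0, orth_proj P &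
      cabs (hsdot X P) >=
        1 / (2 * Num.sqrt (4 * ln (2 * K) + 2)) * hsnorm X * hsnorm P].
Proof.
move=> _ K_ge1 X_neq0 height_le.
set c := 1 / _; set s := hsnorm X; set T := trnorm X; set M := opnorm X.
have s_gt0 : 0 < s := hsnorm_gt0 X_neq0.
have TM_le : T * M <= K ^+ 2 * s ^+ 2.
  exact: trnorm_mul_opnorm_le X_neq0 (le_trans ler01 K_ge1) height_le.
case: (threshold_tradeoff K_ge1 s_gt0 (trnorm_ge0 X) TM_le (hsnorm_sqr_le X)).
rewrite -/c; set b := c * s; set a := 2 * b ^+ 2 / T => a_gt0 a_le_M lt_s2.
apply: NNPP => no_proj; move: lt_s2; rewrite ltNge => /negP; apply.
apply: hsnorm_sqr_le_ln => // U J U_unitary.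
have [->|J_neq0] := eqVneq J set0.
  by rewrite hsdot_unitary_proj // big_set0 /cabs normr0 cards0 sqrtr0 mulr0.
rewrite leNgt; apply/negP => /ltW proj_ge; apply: no_proj; exists (unitary_proj U J).
split; [exact: unitary_proj_neq0 | exact: unitary_proj_orth | by rewrite hsnorm_unitary_proj].
Qed.
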